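(* Consider the system $\frac{d\boldsymbol{x}}{dt}=\mathbf{A}\boldsymbol{x}+\mathbf{B}_p\boldsymbol{p}+\mathbf{B}_d\boldsymbol{d}$ on $\mathcal{T}=[0,t_f]$, with $\boldsymbol{x}\in\mathbb{R}^{N_x}$, $\boldsymbol{p}\in\mathbb{R}^{N_p}_+$, $\mathbf{A}$ having non-positive diagonal and non-negative off-diagonal entries, $\mathbf{B}_p\ge 0$ entrywise, given $\boldsymbol{d}$ and $\boldsymbol{x}_0$, power bounds $\boldsymbol{0}\le\boldsymbol{p}_{\min}\le\boldsymbol{p}_{\max}$ and state bounds $\boldsymbol{x}_{\min}\le\boldsymbol{x}_{\max}$. Let $\boldsymbol{\delta}:\mathcal{T}\to\mathbb{R}^{N_p}$ be a fixed dispatch plan with $\delta_j(t)\ge0$ and $\sum_{j}\delta_j(t)=1$ for all $t$; a total power trajectory $p_{\mathrm{tot}}\ge 0$ is dispatched as $p_j(t)=\delta_j(t)p_{\mathrm{tot}}(t)$. Define for $i=1,\dots,N_x$ $$\gamma_{+,i}(t)=\max_{0\le\tau\le t}\sum_{j}\big(e^{\mathbf{A}(t-\tau)}\mathbf{B}_p\big)_{i,j}\delta_j(\tau),\qquad \gamma_{-,i}(t)=\min_{0\le\tau\le t}\sum_{j}\big(e^{\mathbf{A}(t-\tau)}\mathbf{B}_p\big)_{i,j}\delta_j(\tau),$$ and assume $\gamma_{\pm,i}(t)>0$ for all $i$ and $t\in\mathcal{T}$. Let $\boldsymbol{p}_+$ and $\boldsymbol{p}_-$ be feasible power trajectories dispatched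 according to $\boldsymbol{\delta}$ (i.e. $\boldsymbol{p}_\pm=\boldsymbol{\delta}p_{\pm,\mathrm{tot}}$ with $p_{\pm,\mathrm{tot}}\ge 0$, satisfying the power bounds and, with the same $\boldsymbol{x}_0,\boldsymbol{d}$, the state bounds for all $t$), and define $$\mathrm{E}^{\mathrm{TI,c}}_{\mathrm{up}}(t)=\min_{i}\frac{1}{\gamma_{+,i}(t)}\Big(\int_0^t e^{\mathbf{A}(t-\tau)}\mathbf{B}_p\boldsymbol{p}_+(\tau)\,d\tau\Big)_i,\qquad \mathrm{E}^{\mathrm{TI,c}}_{\mathrm{down}}(t)=\max_{i}\frac{1}{\gamma_{-,i}(t)}\Big(\int_0^t e^{\mathbf{A}(t-\tau)}\mathbf{B}_p\boldsymbol{p}_-(\tau)\,d\tau\Big)_i.$$ If a total power trajectory $p_{a,\mathrm{tot}}\ge0$, dispatched as $\boldsymbol{p}_a=\boldsymbol{\delta}p_{a,\mathrm{tot}}$, satisfies $\boldsymbol{p}_{\min}\le\boldsymbol{p}_a(t)\le\boldsymbol{p}_{\max}$ and $\mathrm{E}^{\mathrm{TI,c}}_{\mathrm{down}}(t)\le\int_0^t p_{a,\mathrm{tot}}(\tau)\,d\tau\le\mathrm{E}^{\mathrm{TI,c}}_{\mathrm{up}}(t)$ for all $t\in\mathcal{T}$, then the resulting state $\boldsymbol{x}_a$ (same $\boldsymbol{x}_0,\boldsymbol{d}$) satisfies $\boldsymbol{x}_{\min}\le\boldsymbol{x}_a(t)\le\boldsymbol{x}_{\max}$ for all $t\in\ma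thcal{T}$.
   Context: Vector inequalities and integrals are componentwise. States are given by $\boldsymbol{x}(t)=e^{\mathbf{A}t}\boldsymbol{x}_0+\int_0^t e^{\mathbf{A}(t-\tau)}(\mathbf{B}_d\boldsymbol{d}(\tau)+\mathbf{B}_p\boldsymbol{p}(\tau))\,d\tau$. This is the ''centralized'' setting in which all inputs are managed as one pool receiving a total power request $p_{\mathrm{tot}}$. *)

From HB Require Import structures.
From mathcomp Require Import all_boot all_order all_algebra.
From mathcomp Require Import all_classical all_reals all_analysis.
Set Implicit Arguments. Unset Strict Implicit. Unset Printing Implicit Defensive.
Import Order.TTheory GRing.Theory Num.Theory.
Import numFieldNormedType.Exports.
Local Open Scope classical_set_scope.
Local Open Scope ring_scope.

Definition expmx {R : realType} (n : nat) (A : 'M[R]_n) : 'M[R]_n :=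
  \matrix_(i, j) limn (fun n => \sum_(k < n) ((A ^+ k) i j / (k`!)%:R)).

Definition Phi {R : realType} (n : nat) (A : 'M[R]_n) (s : R) : 'M[R]_n :=
  expmx (s *: A).

Definition int0 {R : realType} (f : R -> R) (t : R) : R :=
  Rintegral lebesgue_measure `[0, t] f.

Definition state {R : realType} (Nx Nd Np : nat) (A : 'M[R]_Nx)
  (Bd : 'M[R]_(Nx, Nd)) (Bp : 'M[R]_(Nx, Np)) (x0 : 'cV[R]_Nx)
  (d : R -> 'cV[R]_Nd) (p : R -> 'cV[R]_Np) (t : R) (i : 'I_Nx) : R :=
  (Phi A t *m x0) i 0 +
  int0 (fun tau => (Phi A (t - tau) *m (Bd *m d tau + Bp *m p tau)) i 0) t.

Definition dispatch {R : realType} (Np : nat) (delta : R -> 'cV[R]_Np)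
  (ptot : R -> R) : R -> 'cV[R]_Np := fun t => ptot t *: delta t.

Definition gdisp {R : realType} (Nx Np : nat) (A : 'M[R]_Nx)
  (Bp : 'M[R]_(Nx, Np)) (delta : R -> 'cV[R]_Np) (t tau : R) (i : 'I_Nx) : R :=
  \sum_j (Phi A (t - tau) *m Bp) i j * delta tau j 0.

Definition gamma_plus {R : realType} (Nx Np : nat) (A : 'M[R]_Nx)
  (Bp : 'M[R]_(Nx, Np)) (delta : R -> 'cV[R]_Np) (t : R) (i : 'I_Nx) : R :=
  sup [set gdisp A Bp delta t tau i | tau in `[0, t]].
Definition gamma_minus {R : realType} (Nx Np : nat) (A : 'M[R]_Nx)
  (Bp : 'M[R]_(Nx, Np)) (delta : R -> 'cV[R]_Np) (t : R) (i : 'I_Nx) : R :=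
  inf [set gdisp A Bp delta t tau i | tau in `[0, t]].

Definition pow_resp {R : realType} (Nx Np : nat) (A : 'M[R]_Nx)
  (Bp : 'M[R]_(Nx, Np)) (p : R -> 'cV[R]_Np) (t : R) (i : 'I_Nx) : R :=
  int0 (fun tau => (Phi A (t - tau) *m Bp *m p tau) i 0) t.

Definition E_up {R : realType} (Nx Np : nat) (A : 'M[R]_Nx)
  (Bp : 'M[R]_(Nx, Np)) (delta : R -> 'cV[R]_Np) (pplus : R -> 'cV[R]_Np)
  (t : R) : R :=
  inf [set (gamma_plus A Bp delta t i)^-1 * pow_resp A Bp pplus t i
      | i in [set: 'I_Nx]].
Definition E_down {R : realType} (Nx Np : nat) (A : 'M[R]_Nx)
  (Bp : 'M[R]_(Nx, Np)) (delta : R -> 'cV[R]_Np) (pminus : R -> 'cV[R]_Np)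
  (t : R) : R :=
  sup [set (gamma_minus A Bp delta t i)^-1 * pow_resp A Bp pminus t i
      | i in [set: 'I_Nx]].

(* Along a dispatched trajectory p = delta p_tot, the i-th state component is
   x_i(t) = (e^{At} x0)_i + (disturbance response)_i + int_0^t g_i(t,tau) p_tot(tau) dtau
   with g_i(t,tau) = sum_j (e^{A(t-tau)} Bp)_ij delta_j(tau) lying in
   [gamma_{-,i}(t), gamma_{+,i}(t)].  For p_a >= 0 this gives
   int g_i p_a <= gamma_{+,i} int p_a <= gamma_{+,i} E_up <= int g_i p_{+,tot},
   so x_a <= x_+ <= x_max componentwise, and symmetrically x_min <= x_- <= x_a. *)

From HB Require Import structures.
From mathcomp Require Import all_boot all_order all_algebra.
From mathcomp Require Import all_classical all_reals all_analysis.
From mathcomp Require Import ring measurable_realfun.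
Set Implicit Arguments. Unset Strict Implicit. Unset Printing Implicit Defensive.
Import Order.TTheory GRing.Theory Num.Theory.
Import numFieldNormedType.Exports.
Local Open Scope classical_set_scope.
Local Open Scope ring_scope.

Section MatrixExponential.
Variable R : realType.

Definition mxsumnorm n (M : 'M[R]_n) : R := \sum_i \sum_j `|M i j|.

Lemma mxsumnorm_ge0 n (M : 'M[R]_n) : 0 <= mxsumnorm M.
Proof. by apply: sumr_ge0 => i _; apply: sumr_ge0. Qed.

Lemma col_sumnorm_le n (M : 'M[R]_n) j : \sum_l `|M l j| <= mxsumnorm M.
Proof.
apply: ler_sum => l _.
by rewrite (bigD1 j) //= lerDl sumr_ge0.
Qed.

Lemma norm_exp_entry_le n (M : 'M[R]_n) k i j :
  `|(M ^+ k) i j| <= mxsumnorm M ^+ k.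
Proof.
elim: k i j => [|k IH] i j.
  by rewrite expr0 mxE; case: (i == j); rewrite ?normr1 ?normr0.
rewrite exprSr mxE; apply: le_trans (ler_norm_sum _ _ _) _.
apply: (@le_trans _ _ (\sum_l mxsumnorm M ^+ k * `|M l j|)).
  by apply: ler_sum => l _; rewrite normrM ler_wpM2r.
by rewrite -mulr_sumr exprSr ler_wpM2l ?exprn_ge0 ?mxsumnorm_ge0 ?col_sumnorm_le.
Qed.

Lemma mxsumnormZ n (M : 'M[R]_n) s : mxsumnorm (s *: M) = `|s| * mxsumnorm M.
Proof.
rewrite /mxsumnorm mulr_sumr; apply: eq_bigr => i _; rewrite mulr_sumr.
by apply: eq_bigr => j _; rewrite mxE normrM.
Qed.

Lemma exp_scale_entry n (M : 'M[R]_n) s k i j :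
  ((s *: M) ^+ k) i j = s ^+ k * (M ^+ k) i j.
Proof.
elim: k i j => [|k IH] i j; first by rewrite !expr0 mul1r.
rewrite !exprSr !mxE mulr_sumr; apply: eq_bigr => l _.
by rewrite IH mxE; ring.
Qed.

Definition expmx_coeff n (M : 'M[R]_n) i j (k : nat) : R := (M ^+ k) i j / k`!%:R.

Lemma norm_expmx_coeff_le n (M : 'M[R]_n) i j c k : mxsumnorm M <= c ->
  `|expmx_coeff M i j k| <= exp_coeff c k.
Proof.
move=> Mc; rewrite /expmx_coeff /exp_coeff /= normrM normfV normr_nat.
rewrite ler_wpM2r ?invr_ge0 ?ler0n //; apply: le_trans (norm_exp_entry_le _ _ _ _) _.
by rewrite lerXn2r ?nnegrE ?mxsumnorm_ge0 ?(le_trans (mxsumnorm_ge0 M)).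
Qed.

Lemma expmx_coeff_normed_cvg n (M : 'M[R]_n) i j c : mxsumnorm M <= c ->
  cvgn [normed series (expmx_coeff M i j)].
Proof.
move=> Mc; have c0 : 0 <= c by exact: le_trans (mxsumnorm_ge0 M) Mc.
apply: (@series_le_cvg _ _ (exp_coeff c)) => // [k|k|k|].
- exact: normr_ge0.
- exact: exp_coeff_ge0.
- exact: norm_expmx_coeff_le.
- exact: is_cvg_series_exp_coeff.
Qed.

Lemma expmxE n (M : 'M[R]_n) i j : expmx M i j = limn (series (expmx_coeff M i j)).
Proof. by rewrite mxE seriesEord. Qed.

Lemma expmx_cvg n (M : 'M[R]_n) i j :
  series (expmx_coeff M i j) @ \oo --> expmx M i j.
Proof. by rewrite expmxE; exact/normed_cvg/(@expmx_coeff_normed_cvg _ M i j _ (lexx _)). Qed.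

Lemma norm_expmx_le n (M : 'M[R]_n) i j c : mxsumnorm M <= c ->
  `|expmx M i j| <= expR c.
Proof.
move=> Mc; have Mcvg := @expmx_coeff_normed_cvg _ M i j _ Mc.
rewrite expmxE expRE /pseries -exp_coeffE.
apply: le_trans (lim_series_norm Mcvg) _.
apply: lim_series_le => // [|k]; first exact: is_cvg_series_exp_coeff.
exact: norm_expmx_coeff_le.
Qed.

Lemma norm_Phi_le n (A : 'M[R]_n) T s i j : `|s| <= T ->
  `|Phi A s i j| <= expR (T * mxsumnorm A).
Proof.
by move=> sT; apply: norm_expmx_le; rewrite mxsumnormZ ler_wpM2r ?mxsumnorm_ge0.
Qed.

Lemma Phi_shift_measurable n (A : 'M[R]_n) t i j (D : set R) :
  measurable_fun D (fun tau => Phi A (t - tau) i j).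
Proof.
pose h N tau := \sum_(k < N) ((t - tau) ^+ k * ((A ^+ k) i j / k`!%:R)).
apply: (@measurable_fun_cvg _ _ _ _ h) => [N|tau _].
  apply: measurable_sum => k; apply: measurable_funM => //.
  by apply: measurable_funX; apply: measurable_funB.
have -> : (fun N => h N tau) = series (expmx_coeff ((t - tau) *: A) i j).
  apply/funext => N; rewrite seriesEord; apply: eq_bigr => k _.
  by rewrite /expmx_coeff exp_scale_entry mulrA.
exact: expmx_cvg.
Qed.

Lemma Phi_shift_mulmx_measurable n m (A : 'M[R]_n) (B : 'M[R]_(n, m)) t i j
    (D : set R) :
  measurable_fun D (fun tau => (Phi A (t - tau) *m B) i j).
Proof.
under eq_fun do rewrite mxE.
by apply: measurable_sum => k; apply: measurable_funM; first exact: Phi_shift_measurable.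
Qed.

End MatrixExponential.

Section IntervalIntegrability.
Variable R : realType.
Notation mu := (@lebesgue_measure R).

Lemma bounded_of_norm_le (f : R -> R) (D : set R) (M : R) :
  (forall y, D y -> `|f y| <= M) -> [bounded f x | x in D].
Proof.
move=> fM; rewrite /bounded_near; near=> N => y Dy.
apply: le_trans (fM y Dy) _; near: N; apply: nbhs_pinfty_ge.
by rewrite num_real.
Unshelve. all: by end_near. Qed.

Lemma integrable_real_sum (D : set R) (I : Type) (s : seq I) (h : I -> R -> R) :
  measurable D -> (forall k, mu.-integrable D (EFin \o h k)) ->
  mu.-integrable D (EFin \o (fun x => \sum_(k <- s) h k x)).
Proof.
move=> mD hi.
have -> : EFin \o (fun x => \sum_(k <- s) h k x) = fun x => (\sum_(k <- s) (h k x)%:E)%E.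
  by apply/funext => x; rewrite /= sumEFin.
exact (@integrable_sum _ _ _ mu D mD I s xpredT (fun k x => (h k x)%:E) (fun k _ => hi k)).
Qed.

Lemma integrableM_bounded (D : set R) (g f : R -> R) : measurable D ->
  measurable_fun D g -> [bounded g x | x in D] ->
  mu.-integrable D (EFin \o f) -> mu.-integrable D (EFin \o (fun x => g x * f x)).
Proof.
move=> mD mg bg fi; have -> : EFin \o (fun x => g x * f x) = ((EFin \o g) \* (EFin \o f))%E.
  by apply/funext => x; rewrite /= EFinM.
exact: integrableMr.
Qed.

Lemma integrable_scale (D : set R) (c : R) (f : R -> R) : measurable D ->
  mu.-integrable D (EFin \o f) -> mu.-integrable D (EFin \o (fun x => c * f x)).
Proof.
move=> mD fi; have -> : EFin \o (fun x => c * f x) = (fun x => c%:E * (EFin \o f) x)%E.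
  by apply/funext => x; rewrite /= EFinM.
exact: integrableZl.
Qed.

Lemma itv0_subset (t tf : R) : t <= tf -> `[0, t] `<=` `[0, tf].
Proof.
move=> ttf x /=; rewrite !in_itv /= => /andP[x0 xt].
by rewrite x0 (le_trans xt ttf).
Qed.

Lemma lebesgue_itv0_lt_pinfty (t : R) : (mu `[0%R, t]%classic < +oo)%E.
Proof. by rewrite lebesgue_measure_itv /=; case: ifP => _; exact: ltry. Qed.

Lemma bounded_integrable_itv0 (f : R -> R) (t tf M : R) : t <= tf ->
  measurable_fun `[0, tf] f -> (forall s, s \in `[0, tf] -> `|f s| <= M) ->
  mu.-integrable `[0, t] (EFin \o f).
Proof.
move=> ttf mf fM; have sub := itv0_subset ttf.
apply: measurable_bounded_integrable => //.
- exact: lebesgue_itv0_lt_pinfty.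
- exact: measurable_funS mf.
- by apply: (bounded_of_norm_le (M := M)) => y /sub; exact: fM.
Qed.

End IntervalIntegrability.

Section FiniteExtrema.
Variable R : realType.

Lemma inf_fin_image_le n (F : 'I_n -> R) k : inf [set F j | j in [set: 'I_n]] <= F k.
Proof.
apply: ge_inf; last by exists k.
exists (- \sum_j `|F j|) => _ [j _ <-]; rewrite lerNl.
apply: le_trans (_ : `|F j| <= _); first by rewrite -normrN ler_norm.
by rewrite (bigD1 j) //= lerDl sumr_ge0.
Qed.

Lemma fin_image_le_sup n (F : 'I_n -> R) k : F k <= sup [set F j | j in [set: 'I_n]].
Proof.
apply: ub_le_sup; last by exists k.
exists (\sum_j `|F j|) => _ [j _ <-].
apply: le_trans (_ : `|F j| <= _); first exact: ler_norm.
by rewrite (bigD1 j) //= lerDl sumr_ge0.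
Qed.

End FiniteExtrema.

Definition dist_resp (R : realType) (Nx Nd : nat) (A : 'M[R]_Nx)
  (Bd : 'M[R]_(Nx, Nd)) (d : R -> 'cV[R]_Nd) (t tau : R) (i : 'I_Nx) : R :=
  (Phi A (t - tau) *m (Bd *m d tau)) i 0.

Section DispatchedResponse.
Variables (R : realType) (Nx Nd Np : nat) (A : 'M[R]_Nx).
Variables (Bp : 'M[R]_(Nx, Np)) (Bd : 'M[R]_(Nx, Nd)).
Variables (d : R -> 'cV[R]_Nd) (delta : R -> 'cV[R]_Np) (t : R) (i : 'I_Nx).
Notation mu := (@lebesgue_measure R).
Notation g := (fun tau => gdisp A Bp delta t tau i).
Notation gamma_p := (gamma_plus A Bp delta t i).
Notation gamma_m := (gamma_minus A Bp delta t i).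

Hypothesis delta_measurable : forall j, measurable_fun `[0, t] (fun s => delta s j 0).
Hypothesis d_integrable : forall k, mu.-integrable `[0, t] (fun s => (d s k 0)%:E).
Hypothesis gamma_plus_gt0 : 0 < gamma_p.
Hypothesis gamma_minus_gt0 : 0 < gamma_m.

(* [sup]/[inf] of an unbounded set is [0], so positivity of gamma forces boundedness. *)
Lemma gdisp_le_gamma_plus tau : tau \in `[0, t] -> g tau <= gamma_p.
Proof.
move=> tau_t; apply: ub_le_sup; last by exists tau.
apply: contrapT => nosup; move: gamma_plus_gt0.
by rewrite /gamma_plus sup_out ?ltxx // => -[].
Qed.

Lemma gamma_minus_le_gdisp tau : tau \in `[0, t] -> gamma_m <= g tau.
Proof.
move=> tau_t; apply: ge_inf; last by exists tau.
apply: contrapT => noinf; move: gamma_minus_gt0.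
by rewrite /gamma_minus inf_out ?ltxx // => -[].
Qed.

Lemma gamma_plus_mul_E_up_le (p : R -> 'cV[R]_Np) :
  gamma_p * E_up A Bp delta p t <= pow_resp A Bp p t i.
Proof.
rewrite -[leRHS]mul1r -(mulfV (lt0r_neq0 gamma_plus_gt0)) -mulrA.
apply: ler_wpM2l; first exact: ltW.
exact: (inf_fin_image_le
  (fun k => (gamma_plus A Bp delta t k)^-1 * pow_resp A Bp p t k)).
Qed.

Lemma pow_resp_le_gamma_minus_mul_E_down (p : R -> 'cV[R]_Np) :
  pow_resp A Bp p t i <= gamma_m * E_down A Bp delta p t.
Proof.
rewrite -[leLHS]mul1r -(mulfV (lt0r_neq0 gamma_minus_gt0)) -mulrA.
apply: ler_wpM2l; first exact: ltW.
exact: (fin_image_le_sup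
  (fun k => (gamma_minus A Bp delta t k)^-1 * pow_resp A Bp p t k)).
Qed.

Lemma pow_resp_dispatchE (p : R -> R) :
  pow_resp A Bp (dispatch delta p) t i = int0 (fun tau => g tau * p tau) t.
Proof.
apply: eq_Rintegral => tau _; rewrite [LHS]mxE /gdisp mulr_suml.
by apply: eq_bigr => j _; rewrite /dispatch [X in _ * X = _]mxE; ring.
Qed.

Lemma state_dispatchE (x0 : 'cV[R]_Nx) (p : R -> R) :
  mu.-integrable `[0, t] (EFin \o dist_resp A Bd d t ^~ i) ->
  mu.-integrable `[0, t] (EFin \o (fun tau => g tau * p tau)) ->
  state A Bd Bp x0 d (dispatch delta p) t i =
  (Phi A t *m x0) i 0 + int0 (dist_resp A Bd d t ^~ i) t
  + pow_resp A Bp (dispatch delta p) t i.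
Proof.
move=> di gpi; rewrite pow_resp_dispatchE /int0 -addrA -RintegralD //.
congr (_ + _); apply: eq_Rintegral => tau _.
rewrite mulmxDr [LHS]mxE; congr (_ + _).
rewrite mulmxA [LHS]mxE /gdisp mulr_suml.
by apply: eq_bigr => j _; rewrite /dispatch [X in _ * X = _]mxE; ring.
Qed.

Lemma gdisp_measurable : measurable_fun `[0, t] g.
Proof.
apply: measurable_sum => j; apply: measurable_funM; last exact: delta_measurable.
exact: Phi_shift_mulmx_measurable.
Qed.

Lemma gdisp_bounded : [bounded g x | x in `[0, t]].
Proof.
apply: (bounded_of_norm_le (M := gamma_p)) => tau tau_t.
have gm_g := gamma_minus_le_gdisp tau_t.
by rewrite ger0_norm ?gdisp_le_gamma_plus // (le_trans (ltW gamma_minus_gt0)).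
Qed.

Lemma gdisp_mul_integrable (p : R -> R) :
  mu.-integrable `[0, t] (EFin \o p) ->
  mu.-integrable `[0, t] (EFin \o (fun tau => g tau * p tau)).
Proof.
exact: integrableM_bounded (measurable_itv _) gdisp_measurable gdisp_bounded.
Qed.

Lemma dist_resp_integrable :
  mu.-integrable `[0, t] (EFin \o dist_resp A Bd d t ^~ i).
Proof.
have -> : dist_resp A Bd d t ^~ i =
    fun tau => \sum_l \sum_k (Phi A (t - tau) i l * Bd l k) * d tau k 0.
  apply/funext => tau; rewrite /dist_resp mxE; apply: eq_bigr => l _.
  by rewrite [(Bd *m _) l 0]mxE mulr_sumr; apply: eq_bigr => k _; rewrite mulrA.
apply: integrable_real_sum => // l; apply: integrable_real_sum => // k.
apply: integrableM_bounded => //; last exact: d_integrable.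
  by apply: measurable_funM => //; exact: Phi_shift_measurable.
apply: (bounded_of_norm_le (M := expR (t * mxsumnorm A) * `|Bd l k|)).
move=> tau /=; rewrite in_itv /= => /andP[tau0 taut].
rewrite normrM ler_wpM2r //; apply: norm_Phi_le.
by rewrite ger0_norm ?subr_ge0 // lerBlDr lerDl.
Qed.

Lemma pow_resp_le_of_int0_le_E_up (pa p : R -> R) :
  mu.-integrable `[0, t] (EFin \o pa) ->
  (forall tau, tau \in `[0, t] -> 0 <= pa tau) ->
  int0 pa t <= E_up A Bp delta (dispatch delta p) t ->
  pow_resp A Bp (dispatch delta pa) t i <= pow_resp A Bp (dispatch delta p) t i.
Proof.
move=> pai pa0 paE; rewrite pow_resp_dispatchE.
apply: le_trans (gamma_plus_mul_E_up_le (dispatch delta p)).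
apply: (@le_trans _ _ (int0 (fun tau => gamma_p * pa tau) t)).
  apply: le_Rintegral => //; [exact: gdisp_mul_integrable | exact: integrable_scale|].
  by move=> tau tau_t; rewrite ler_wpM2r ?pa0 ?gdisp_le_gamma_plus.
rewrite /int0 RintegralZl //; apply: ler_wpM2l; [exact: ltW | exact: paE].
Qed.

Lemma pow_resp_ge_of_E_down_le_int0 (pa p : R -> R) :
  mu.-integrable `[0, t] (EFin \o pa) ->
  (forall tau, tau \in `[0, t] -> 0 <= pa tau) ->
  E_down A Bp delta (dispatch delta p) t <= int0 pa t ->
  pow_resp A Bp (dispatch delta p) t i <= pow_resp A Bp (dispatch delta pa) t i.
Proof.
move=> pai pa0 paE; rewrite [leRHS]pow_resp_dispatchE.
apply: le_trans (pow_resp_le_gamma_minus_mul_E_down (dispatch delta p)) _.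
apply: (@le_trans _ _ (int0 (fun tau => gamma_m * pa tau) t)); last first.
  apply: le_Rintegral => //; [exact: integrable_scale | exact: gdisp_mul_integrable|].
  by move=> tau tau_t; rewrite ler_wpM2r ?pa0 ?gamma_minus_le_gdisp.
rewrite /int0 RintegralZl //; apply: ler_wpM2l; [exact: ltW | exact: paE].
Qed.

End DispatchedResponse.

Lemma le_sum_of_scale_le (R : numDomainType) n (c : R) (w u : 'cV[R]_n) :
  \sum_j w j 0 = 1 -> (forall j, (c *: w) j 0 <= u j 0) -> c <= \sum_j u j 0.
Proof.
move=> w1 cwu; rewrite -[c]mulr1 -w1 mulr_sumr; apply: ler_sum => j _.
by have := cwu j; rewrite mxE.
Qed.

Lemma dispatch_integrable_itv0 (R : realType) Np (delta : R -> 'cV[R]_Np)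
    (pmin pmax : 'cV[R]_Np) (p : R -> R) (t tf : R) : t <= tf ->
  (forall s, s \in `[0, tf] -> \sum_j delta s j 0 = 1) ->
  measurable_fun `[0, tf] p -> (forall s, s \in `[0, tf] -> 0 <= p s) ->
  (forall s, s \in `[0, tf] -> forall j,
     pmin j 0 <= dispatch delta p s j 0 <= pmax j 0) ->
  lebesgue_measure.-integrable `[0, t] (EFin \o p).
Proof.
move=> t_tf delta1 p_meas p_ge0 p_bd.
apply: (bounded_integrable_itv0 (M := \sum_j pmax j 0) t_tf p_meas) => s s_in.
rewrite ger0_norm ?p_ge0 //; apply: le_sum_of_scale_le (delta1 s s_in) _.
by move=> j; case/andP: (p_bd s s_in j).
Qed.

Theorem theorem4 (R : realType) (Nx Nd Np : nat) (tf : R)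
  (A : 'M[R]_Nx) (Bp : 'M[R]_(Nx, Np)) (Bd : 'M[R]_(Nx, Nd))
  (x0 : 'cV[R]_Nx) (d : R -> 'cV[R]_Nd)
  (pmin pmax : 'cV[R]_Np) (xmin xmax : 'cV[R]_Nx)
  (delta : R -> 'cV[R]_Np) (pplus_tot pminus_tot pa_tot : R -> R) :
  (forall i, A i i <= 0) ->
  (forall i j, i != j -> 0 <= A i j) ->
  (forall i j, 0 <= Bp i j) ->
  (forall j, 0 <= pmin j 0 <= pmax j 0) ->
  (forall i, xmin i 0 <= xmax i 0) ->
  (forall k, measurable_fun `[0, tf] (fun t => d t k 0)) ->
  (forall k, lebesgue_measure.-integrable `[0, tf] (fun t => (d t k 0)%:E)) ->
  (forall j, measurable_fun `[0, tf] (fun t => delta t j 0)) ->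
  (forall t, t \in `[0, tf] -> forall j, 0 <= delta t j 0) ->
  (forall t, t \in `[0, tf] -> \sum_j delta t j 0 = 1) ->
  (forall t, t \in `[0, tf] -> forall i,
     0 < gamma_plus A Bp delta t i /\ 0 < gamma_minus A Bp delta t i) ->
  measurable_fun `[0, tf] pplus_tot ->
  (forall t, t \in `[0, tf] -> 0 <= pplus_tot t) ->
  (forall t, t \in `[0, tf] -> forall j,
     pmin j 0 <= dispatch delta pplus_tot t j 0 <= pmax j 0) ->
  (forall t, t \in `[0, tf] -> forall i,
     xmin i 0 <= state A Bd Bp x0 d (dispatch delta pplus_tot) t i <= xmax i 0) ->
  measurable_fun `[0, tf] pminus_tot ->
  (forall t, t \in `[0, tf] -> 0 <= pminus_tot t) ->
  (forall t, t \in `[0, tf] -> forall j,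
     pmin j 0 <= dispatch delta pminus_tot t j 0 <= pmax j 0) ->
  (forall t, t \in `[0, tf] -> forall i,
     xmin i 0 <= state A Bd Bp x0 d (dispatch delta pminus_tot) t i <= xmax i 0) ->
  measurable_fun `[0, tf] pa_tot ->
  (forall t, t \in `[0, tf] -> 0 <= pa_tot t) ->
  (forall t, t \in `[0, tf] -> forall j,
     pmin j 0 <= dispatch delta pa_tot t j 0 <= pmax j 0) ->
  (forall t, t \in `[0, tf] ->
     E_down A Bp delta (dispatch delta pminus_tot) t <= int0 pa_tot t
       <= E_up A Bp delta (dispatch delta pplus_tot) t) ->
  forall t, t \in `[0, tf] -> forall i,
    xmin i 0 <= state A Bd Bp x0 d (dispatch delta pa_tot) t i <= xmax i 0.
Proof.
move=> _ _ _ _ _ _ d_int delta_meas _ delta_sum gamma_pos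
  plus_meas plus_ge0 plus_bd plus_ok minus_meas minus_ge0 minus_bd minus_ok
  pa_meas pa_ge0 pa_bd pa_energy t t_in i.
have [_ t_tf] : 0 <= t /\ t <= tf by move: t_in; rewrite in_itv /= => /andP[].
have sub := itv0_subset t_tf.
have [gp_gt0 gm_gt0] := gamma_pos t t_in i.
have delta_meas_t j := measurable_funS (measurable_itv _) sub (delta_meas j).
have d_int_t k : lebesgue_measure.-integrable `[0, t] (fun s => (d s k 0)%:E).
  exact: integrableS (d_int k).
have tot_int p := @dispatch_integrable_itv0 _ _ delta pmin pmax p t tf t_tf delta_sum.
have stateE (p : R -> R) : lebesgue_measure.-integrable `[0, t] (EFin \o p) ->
    state A Bd Bp x0 d (dispatch delta p) t i = (Phi A t *m x0) i 0
      + int0 (dist_resp A Bd d t ^~ i) t + pow_resp A Bp (dispatch delta p) t i.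
  move=> p_int; apply: state_dispatchE; first exact: dist_resp_integrable.
  exact: gdisp_mul_integrable.
have plus_int := tot_int _ plus_meas plus_ge0 plus_bd.
have minus_int := tot_int _ minus_meas minus_ge0 minus_bd.
have pa_int := tot_int _ pa_meas pa_ge0 pa_bd.
have pa_ge0_t tau : tau \in `[0, t] -> 0 <= pa_tot tau.
  by move=> /sub; exact: pa_ge0.
have [E_down_le E_up_ge] := andP (pa_energy t t_in).
move: (plus_ok t t_in i) (minus_ok t t_in i) => /andP[_ le_xmax] /andP[ge_xmin _].
rewrite !stateE // in le_xmax ge_xmin *.
apply/andP; split.
- apply: le_trans ge_xmin _; rewrite lerD2l.
  exact: pow_resp_ge_of_E_down_le_int0.
- apply: le_trans le_xmax; rewrite lerD2l.
  exact: pow_resp_le_of_int0_le_E_up.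
Show. Qed.
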